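(* Let $G$ be a topological group (a group with a topology making multiplication jointly continuous and inversion continuous; no separation axiom assumed). Then $G$ is dense-connected if and only if the topology of $G$ is indiscrete.
   Context: A space $X$ is dense-connected if every dense subset of $X$ (with the subspace topology) is connected. *)

From HB Require Import structures.
From mathcomp Require Import all_boot all_algebra.
From mathcomp Require Import all_classical all_reals all_analysis.
Set Implicit Arguments. Unset Strict Implicit. Unset Printing Implicit Defensive.
Local Open Scope classical_set_scope.

Definition topological_group (T : topologicalType)
    (mul : T -> T -> T) (inv : T -> T) (e : T) : Prop :=
  [/\ (forall x y z, mul x (mul y z) = mul (mul x y) z),
      (forall x, mul e x = x /\ mul x e = x),
      (forall x, mul (inv x) x = e /\ mul x (inv x) = e),
      continuous (fun p : T * T => mul p.1 p.2)
    & continuous inv].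

(* every dense subset, with the subspace topology, is connected
   (library [connected A] is connectedness of A in the subspace topology) *)
Definition dense_connected (T : topologicalType) : Prop :=
  forall S : set T, dense S -> connected S.

Definition indiscrete (T : topologicalType) : Prop :=
  forall U : set T, open U -> U = set0 \/ U = setT.

From HB Require Import structures.
From mathcomp Require Import all_boot all_algebra.
From mathcomp Require Import all_classical all_reals all_analysis.

(* The proof passes through hyperconnectedness: any two nonempty open sets
   meet (equivalently, every nonempty open set is dense).
   - Indiscrete => dense-connected: in an indiscrete space every set is
     connected, since its only relatively open subsets are empty or itself.
   - Dense-connected => hyperconnected (any space): if U is open and some
     nonempty open V misses U, then U `|` ~` closure U is dense but splits
     into the separated pieces U and ~` closure U, both nonempty.
   - Hyperconnected group => indiscrete: for nonempty open P, Q the set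
     P * Q is the whole group, because P meets the nonempty open set
     x * Q^-1.  Given u in an open U, continuity of multiplication at
     (u, e) yields nonempty open P, Q with P * Q inside U, so U is total. *)

Local Open Scope classical_set_scope.

Definition hyperconnected (T : topologicalType) : Prop :=
  forall U V : set T, open U -> open V -> U !=set0 -> V !=set0 ->
    U `&` V !=set0.

(* In an indiscrete space every subset is connected: a nonempty relatively
   open subset B = A `&` C has C nonempty, hence C = setT and B = A. *)
Lemma indiscrete_connected (T : topologicalType) (A : set T) :
  indiscrete T -> connected A.
Proof.
move=> indT B [b Bb] [C oC BAC] _.
have [C0|CT] := indT C oC; last by rewrite BAC CT setIT.
by move: Bb; rewrite BAC C0 setI0.
Qed.

Section HyperconnectedFromDenseConnected.
Context {T : topologicalType}.
Implicit Types U W : set T.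

(* An open set missing U misses its closure: it lies in (~` U)°. *)
Lemma open_disjoint_closureC U W : open W -> W `<=` ~` U -> W `<=` ~` closure U.
Proof. by move=> oW WU; rewrite -interiorC -open_subsetE. Qed.

Lemma separated_open_closureC U : open U -> separated U (~` closure U).
Proof.
move=> oU; split; first exact: setICr.
apply/disjoints_subset; rewrite closure_setC setCK -open_subsetE //.
exact: subset_closure.
Qed.

Lemma dense_setU_closureC U : dense (U `|` ~` closure U).
Proof.
move=> W [w Ww] oW.
have [[z [Wz Uz]]|WU] := pselect (W `&` U !=set0).
  by exists z; split => //; left.
exists w; split => //; right; apply: (open_disjoint_closureC U W oW _ w Ww).
by move=> z Wz Uz; apply: WU; exists z.
Qed.

(* If U, V are nonempty, open and disjoint, the dense set
   U `|` ~` closure U is the union of two nonempty separated pieces. *)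
Lemma dense_connected_hyperconnected : dense_connected T -> hyperconnected T.
Proof.
move=> dcT U V oU oV [u Uu] [v Vv]; apply: contrapT => UV.
have VUc : V `<=` ~` closure U.
  by apply: open_disjoint_closureC => // z Vz Uz; apply: UV; exists z.
have := connected_subset (separated_open_closureC U oU) (fun _ x => x)
  (dcT _ (dense_setU_closureC U)).
case=> [/(_ v (or_intror (VUc v Vv))) Uv|/(_ u (or_introl Uu))].
- by apply: UV; exists v.
- by apply; exact: subset_closure.
Qed.

End HyperconnectedFromDenseConnected.

Section TopologicalGroup.
Context {T : topologicalType} {mul : T -> T -> T} {inv : T -> T} {e : T}.
Hypothesis tgT : topological_group mul inv e.

Lemma tg_mulA x y z : mul x (mul y z) = mul (mul x y) z.
Proof. by case: tgT. Qed.

Lemma tg_mul1g x : mul e x = x.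
Proof. by case: tgT => _ /(_ x) []. Qed.

Lemma tg_mulg1 x : mul x e = x.
Proof. by case: tgT => _ /(_ x) []. Qed.

Lemma tg_mulVg x : mul (inv x) x = e.
Proof. by case: tgT => _ _ /(_ x) []. Qed.

Lemma tg_mulgV x : mul x (inv x) = e.
Proof. by case: tgT => _ _ /(_ x) []. Qed.

Lemma tg_invK x : inv (inv x) = x.
Proof.
rewrite -[inv (inv x)]tg_mulg1 -(tg_mulVg x) tg_mulA tg_mulVg.
exact: tg_mul1g.
Qed.

Lemma continuous_tg_mul (S : topologicalType) (f g : S -> T) :
  continuous f -> continuous g -> continuous (fun s => mul (f s) (g s)).
Proof.
case: tgT => _ _ _ mulC _ fC gC s.
by apply: continuous2_cvg; [exact: (mulC (f s, g s))|exact: fC|exact: gC].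
Qed.

Lemma open_mul_nbhs {a b : T} {U : set T} : open U -> U (mul a b) ->
  exists P Q : set T, [/\ open P, open Q, P a, Q b &
    forall p q, P p -> Q q -> U (mul p q)].
Proof.
case: tgT => _ _ _ mulC _ oU Uab.
have /(mulC (a, b)) [[P Q] /= [Pa Qb] PQU] : nbhs (mul a b) U.
  exact: open_nbhs_nbhs.
exists P°, Q°; split; try exact: open_interior.
- exact: nbhs_singleton (nbhs_interior Pa).
- exact: nbhs_singleton (nbhs_interior Qb).
- by move=> p q /interior_subset Pp /interior_subset Qq; exact: (PQU (p, q)).
Qed.

(* In a hyperconnected group P * Q is everything: x = p * q with p in P
   and q in Q, since P meets the nonempty open set x * Q^-1. *)
Lemma hyperconnected_mul_cover {P Q : set T} : hyperconnected T ->
  open P -> open Q -> P !=set0 -> Q !=set0 ->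
  forall x, exists p q, [/\ P p, Q q & mul p q = x].
Proof.
move=> hcT oP oQ P0 [q0 Qq0] x.
pose W := [set g | Q (mul (inv g) x)].
have oW : open W.
  apply: (proj1 (continuousP (fun g => mul (inv g) x)) _ _ oQ).
  by apply: continuous_tg_mul => [|y]; [case: tgT|exact: cvg_cst].
have W0 : W !=set0.
  exists (inv (mul q0 (inv x))).
  by rewrite /W /= tg_invK -tg_mulA tg_mulVg tg_mulg1.
have [p [Pp Wp]] := hcT P W oP oW P0 W0.
by exists p, (mul (inv p) x); rewrite tg_mulA tg_mulgV tg_mul1g.
Qed.

(* A nonempty open U contains some P * Q with P, Q nonempty open, which
   is already the whole group. *)
Lemma hyperconnected_indiscrete : hyperconnected T -> indiscrete T.
Proof.
move=> hcT U oU; have [->|/set0P [u Uu]] := eqVneq U set0; [by left|right].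
have Uue : U (mul u e) by rewrite tg_mulg1.
have [P [Q [oP oQ Pu Qe PQU]]] := open_mul_nbhs oU Uue.
apply/seteqP; split => // x _.
have [p [q [Pp Qq <-]]] :=
  hyperconnected_mul_cover hcT oP oQ (ex_intro _ u Pu) (ex_intro _ e Qe) x.
exact: PQU.
Qed.

End TopologicalGroup.

Theorem corollary4p5 (T : topologicalType) (mul : T -> T -> T) (inv : T -> T)
    (e : T) :
  topological_group mul inv e -> (dense_connected T <-> indiscrete T).
Proof.
move=> tgT; split => [dcT|indT S _].
  exact: hyperconnected_indiscrete tgT (dense_connected_hyperconnected dcT).
exact: indiscrete_connected.
Qed.
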